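(* Let $Z\in\mathbb{R}^{n\times m}$ be fixed, $\theta^*\in\mathbb{R}^m$, and $\rho_\lambda:[0,\infty)\to[0,\infty)$ a regularizer. If $\operatorname{supp}(\theta^* )\subset S\subset U\subset[m]$, then $\mathcal{W}(Z,\theta^*;S)\subset\mathcal{W}(Z,\theta^*;U)$. In particular, for any random vector $\varepsilon\in\mathbb{R}^n$, the event $\{\varepsilon\in\mathcal{W}(Z,\theta^*;S)\}$ is contained in the event $\{\varepsilon\in\mathcal{W}(Z,\theta^*;U)\}$.
   Context: $\rho_\lambda(\theta)=\sum_i\rho_\lambda(|\theta_i|)$. For $y\in\mathbb{R}^n$ and $S\subset[m]$, $\mathcal{P}(y,Z;S)=\arg\min_{\theta\in\mathbb{R}^m,\ \operatorname{supp}(\theta)\subset S}\frac{1}{2n}\|y-Z\theta\|_2^2+\rho_\lambda(\theta)$ (the set of global minimizers). $\mathcal{W}(Z,\theta^*;S)=\{w\in\mathbb{R}^n:\exists\,\hat\theta\in\mathcal{P}(Z\theta^*+w,Z;S)\text{ with }\operatorname{supp}(\hat\theta)\neq\operatorname{supp}(\theta^* )\}$. *)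

From HB Require Import structures.
From mathcomp Require Import all_boot all_order all_algebra.
From mathcomp Require Import reals.
Set Implicit Arguments. Unset Strict Implicit. Unset Printing Implicit Defensive.
Import Order.TTheory GRing.Theory Num.Theory.
Local Open Scope ring_scope.

(* A regularizer rho_lambda : [0,oo) -> [0,oo), represented as a function
   R -> R of which only the values on [0,oo) matter.  Standing conventions: rho(0) = 0, rho >= 0, nondecreasing and lower
   semicontinuous on [0,oo). *)
Definition regularizer (R : realType) (rho : R -> R) : Prop :=
  [/\ rho 0 = 0,
      (forall t, 0 <= t -> 0 <= rho t),
      (forall s t, 0 <= s -> s <= t -> rho s <= rho t) &
      (forall t e, 0 <= t -> 0 < e ->
         exists2 d, 0 < d & forall s, 0 <= s -> `|s - t| < d -> rho t - e < rho s)].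

Definition supp (R : realType) (m : nat) (theta : 'cV[R]_m) : {set 'I_m} :=
  [set i | theta i ord0 != 0].

Definition penalty (R : realType) (rho : R -> R) (m : nat) (theta : 'cV[R]_m) : R :=
  \sum_(i < m) rho `|theta i ord0|.

Definition objective (R : realType) (rho : R -> R) (n m : nat)
    (y : 'cV[R]_n) (Z : 'M[R]_(n, m)) (theta : 'cV[R]_m) : R :=
  (2 * n%:R)^-1 * (\sum_(k < n) ((y - Z *m theta) k ord0) ^+ 2) + penalty rho theta.

Definition in_P (R : realType) (rho : R -> R) (n m : nat)
    (y : 'cV[R]_n) (Z : 'M[R]_(n, m)) (S : {set 'I_m}) (theta : 'cV[R]_m) : Prop :=
  supp theta \subset S /\
  forall theta' : 'cV[R]_m, supp theta' \subset S ->
    objective rho y Z theta <= objective rho y Z theta'.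

Definition in_W (R : realType) (rho : R -> R) (n m : nat)
    (Z : 'M[R]_(n, m)) (theta_star : 'cV[R]_m) (S : {set 'I_m}) (w : 'cV[R]_n) : Prop :=
  exists theta_hat : 'cV[R]_m,
    in_P rho (Z *m theta_star + w) Z S theta_hat /\ supp theta_hat != supp theta_star.

From HB Require Import structures.
From mathcomp Require Import all_boot all_order all_algebra.
From mathcomp Require Import reals.
From mathcomp Require Import boolp classical_sets topology normedtype.
From mathcomp Require Import lra finmap.
Import Order.TTheory GRing.Theory Num.Theory.
Import numFieldNormedType.Exports.
Local Open Scope ring_scope.

(* If θ̂ ∈ P(Zθ* + w, Z; S) has the wrong support, take any minimiser θ_U over U.
   Either supp θ_U ≠ supp θ* already, or θ_U is supported in supp θ* ⊆ S, so that
   θ̂ does at least as well as θ_U and is itself a minimiser over U.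

   The work lies in the existence of minimisers over U, since ρ need be neither
   convex nor coercive.  Split the vectors supported in U into sign orthants and
   induct on the number of free coordinates.  If Z kills no nonzero vector of the
   orthant, the objective is coercive on it and, being lower semicontinuous,
   attains its minimum on a compact ball.  Otherwise, sliding along such a kernel
   vector until a coordinate vanishes leaves Zθ unchanged and shrinks every |θ_i|,
   so it suffices to minimise over the faces. *)

Section Minimizers.
Set Implicit Arguments. Unset Strict Implicit. Unset Printing Implicit Defensive.
Local Open Scope classical_set_scope.
Variable R : realType.

Definition attains_min {T : Type} (f : T -> R) (A : set T) :=
  exists2 c, A c & forall x, A x -> f c <= f x.

Lemma attains_min_dominated {T : Type} (f : T -> R) (A B : set T) :
  B `<=` A -> attains_min f B ->
  (forall x, A x -> exists2 x', B x' & f x' <= f x) -> attains_min f A.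
Proof.
move=> BA [c Bc cmin] dom; exists c; first exact: BA.
by move=> x /dom[x' Bx' le_x'x]; apply: le_trans (cmin _ Bx') le_x'x.
Qed.

Lemma attains_min_bigcup {T : Type} (I : finType) (P : pred I) (A : I -> set T)
    (f : T -> R) (i0 : I) :
  P i0 -> (forall i, P i -> attains_min f (A i)) ->
  attains_min f [set x | exists2 i, P i & A i x].
Proof.
move=> Pi0 minA; have [c0 _ _] := minA i0 Pi0.
have [mu muP] : {mu : I -> T & forall i, P i ->
    A i (mu i) /\ forall x, A i x -> f (mu i) <= f x}.
  apply: (choice (P := fun i c => P i -> A i c /\ forall x, A i x -> f c <= f x)).
  by move=> i; case: (boolP (P i)) => [/minA[c Ac cmin]|_]; [exists c | exists c0].
case: (arg_minP (f \o mu) Pi0) => i Pi imin.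
exists (mu i); first by exists i => //; case: (muP i Pi).
move=> x [j Pj Ajx]; apply: le_trans (imin j Pj) _.
by case: (muP j Pj) => _; apply.
Qed.

Definition lower_semicontinuous_at {T : topologicalType} (f : T -> R) (x : T) :=
  forall e : R, 0 < e -> \forall y \near x, f x - e < f y.

Lemma continuous_lsc_at {T : topologicalType} (f : T -> R) x :
  {for x, continuous f} -> lower_semicontinuous_at f x.
Proof.
move=> cf e e0; have : \forall y \near x, `|f x - f y| < e by apply: cvgr_dist_lt.
by apply: filterS => y; rewrite ltr_norml => /andP[h1 h2]; lra.
Qed.

Lemma lsc_atD {T : topologicalType} (f g : T -> R) x :
  lower_semicontinuous_at f x -> lower_semicontinuous_at g x ->
  lower_semicontinuous_at (fun y => f y + g y) x.
Proof.
move=> lf lg e e0; have e20 : 0 < e / 2 by rewrite divr_gt0.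
by apply: filterS2 (lf _ e20) (lg _ e20) => y h1 h2 /=; lra.
Qed.

Lemma lsc_at_sum {T : topologicalType} (I : Type) (s : seq I) (g : I -> T -> R) x :
  (forall i, lower_semicontinuous_at (g i) x) ->
  lower_semicontinuous_at (fun y => \sum_(i <- s) g i y) x.
Proof.
elim: s => [|i s IH] lg e e0.
  by apply: nearW => y; rewrite !big_nil; lra.
by apply: filterS (lsc_atD (lg i) (IH lg) e0) => y; rewrite !big_cons.
Qed.

Lemma seq_gap (s : seq R) (m : R) : (forall r, r \in s -> m < r) ->
  exists2 d, 0 < d & forall r, r \in s -> m + d <= r.
Proof.
elim: s => [|a s IH] gt_m; first by exists 1.
have [|d d0 le_d] := IH; first by move=> r rs; apply: gt_m; rewrite inE rs orbT.
have ma : m < a by apply: gt_m; rewrite inE eqxx.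
exists (Num.min d (a - m)); first by rewrite lt_min d0 subr_gt0.
move=> r; rewrite inE => /orP[/eqP->|rs].
  have : Num.min d (a - m) <= a - m by rewrite ge_min lexx orbT.
  lra.
have : Num.min d (a - m) <= d by rewrite ge_min lexx.
have := le_d r rs; lra.
Qed.

(* If [f] had no minimum on [A], the open sets [{f > r}] for [r > inf f(A)]
   would cover [A] without a finite subcover. *)
Lemma lsc_compact_attains_min {T : ptopologicalType} (f : T -> R) (A : set T) (M : R) :
  A !=set0 -> compact A -> (forall x, A x -> lower_semicontinuous_at f x) ->
  (forall x, A x -> M <= f x) -> attains_min f A.
Proof.
move=> [a Aa] cA lf lbM; set E := f @` A.
have hE : has_inf E by split; [exists (f a), a | exists M => _ [x Ax <-]; exact: lbM].
have inf_le x : A x -> inf E <= f x by move=> Ax; apply: (ge_inf hE.2); exists x.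
apply: contrapT => nomin.
have inf_lt x : A x -> inf E < f x.
  move=> Ax; rewrite lt_neqAle inf_le // andbT; apply/negP => /eqP infE.
  by apply: nomin; exists x => // t At; rewrite -infE; exact: inf_le.
have cover_A : A `<=` cover [set r | inf E < r] (fun r => interior [set y | r < f y]).
  move=> x Ax; have := inf_lt x Ax => ltx.
  exists ((inf E + f x) / 2); first by rewrite /=; lra.
  have h0 : 0 < (f x - inf E) / 2 by lra.
  by rewrite /interior /=; apply: filterS (lf x Ax _ h0) => y /=; lra.
move: cA; rewrite compact_cover => /(_ R _ _ (fun r _ => @open_interior _ _) cover_A).
move=> [D sD cov]; have [|d d0 le_d] := @seq_gap (enum_fset D) (inf E).
  by move=> r rD; have := sD r rD; rewrite in_setE.
have [_ [t At <-] ft] := inf_adherent d0 hE.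
have [r rD /interior_subset /= rt] := cov t At.
have := le_d r rD; lra.
Qed.

End Minimizers.

Section Objective.
Set Implicit Arguments. Unset Strict Implicit. Unset Printing Implicit Defensive.
Local Open Scope classical_set_scope.
Variables (R : realType) (rho : R -> R) (n m : nat) (Z : 'M[R]_(n, m)) (y : 'cV[R]_n).
Hypothesis rho_reg : regularizer rho.

Definition lin (c : 'I_m -> R) (x : 'rV[R]_m) := \sum_(j < m) c j * x ord0 j.

Lemma lin_continuous c : continuous (lin c).
Proof.
apply: continuous_big; first exact: pseudometric_normed_Zmodule.add_continuous.
move=> j _ x.
exact: (@cvgM _ _ _ _ (fun=> c j) (fun z : 'rV[R]_m => z ord0 j) _ _
  (cvg_cst (c j)) (@coord_continuous R 1 m ord0 j x)).
Qed.

Lemma linZ c s x : lin c (s *: x) = s * lin c x.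
Proof. by rewrite /lin mulr_sumr; apply: eq_bigr => j _; rewrite mxE mulrCA. Qed.

Lemma linB c x x' : lin c (x - x') = lin c x - lin c x'.
Proof. by rewrite /lin -sumrB; apply: eq_bigr => j _; rewrite !mxE mulrBr. Qed.

Lemma lin0 c : lin c 0 = 0.
Proof. by rewrite /lin big1 // => j _; rewrite mxE mulr0. Qed.

(* Vectors are rows here because [rV_compact] and [coord_continuous] are stated for rows. *)
Definition obj (x : 'rV[R]_m) := objective rho y Z x^T.

Lemma objE (x : 'rV[R]_m) :
  obj x = (2 * n%:R)^-1 * \sum_(k < n) (y k ord0 - lin (Z k) x) ^+ 2
          + \sum_(i < m) rho `|x ord0 i|.
Proof.
rewrite /obj /objective /penalty; congr (_ * _ + _).
  apply: eq_bigr => k _; rewrite !mxE; congr ((_ - _) ^+ 2).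
  by apply: eq_bigr => j _; rewrite !mxE.
by apply: eq_bigr => i _; rewrite mxE.
Qed.

Lemma penalty_ge0 (x : 'rV[R]_m) : 0 <= \sum_(i < m) rho `|x ord0 i|.
Proof. by apply: sumr_ge0 => i _; case: rho_reg => _ -> . Qed.

Lemma obj_ge0 (x : 'rV[R]_m) : 0 <= obj x.
Proof.
rewrite objE addr_ge0 ?penalty_ge0 // mulr_ge0 ?invr_ge0 ?mulr_ge0 ?ler0n //.
by apply: sumr_ge0 => k _; exact: sqr_ge0.
Qed.

Lemma obj_lsc (x : 'rV[R]_m) : lower_semicontinuous_at obj x.
Proof.
have -> : obj = fun x => (2 * n%:R)^-1 * \sum_(k < n) (y k ord0 - lin (Z k) x) ^+ 2
                         + \sum_(i < m) rho `|x ord0 i|.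
  by apply: funext => z; rewrite objE.
have quad_cont : continuous (fun x : 'rV[R]_m => \sum_(k < n) (y k ord0 - lin (Z k) x) ^+ 2).
  apply: continuous_big; first exact: pseudometric_normed_Zmodule.add_continuous.
  move=> k _ z.
  have res : (fun x => y k ord0 - lin (Z k) x) @ z --> y k ord0 - lin (Z k) z.
    exact: (cvgB (cvg_cst _) (@lin_continuous (Z k) z)).
  exact: (cvgM res res).
apply: lsc_atD; first exact/continuous_lsc_at/(cvgM (cvg_cst _) (quad_cont x)).
apply: lsc_at_sum => i e e0; case: rho_reg => _ _ _ /(_ _ e (normr_ge0 (x ord0 i : R)) e0).
move=> [d d0 close_d].
have := @cvgr_dist_lt _ _ _ _ _ (fun z : 'rV[R]_m => z ord0 i) (x ord0 i)
  (@coord_continuous R 1 m ord0 i x) d d0.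
move/(_ (nbhs_filter x)); apply: filterS => z /= hz; apply: close_d => //.
by apply: le_lt_trans (ler_dist_dist _ _) _; rewrite distrC.
Qed.

Lemma obj_sub_kernel (x d : 'rV[R]_m) t : (forall k, lin (Z k) d = 0) ->
  (forall i, `|x ord0 i - t * d ord0 i| <= `|x ord0 i|) -> obj (x - t *: d) <= obj x.
Proof.
move=> dker shrink; rewrite !objE.
under eq_bigr do rewrite linB linZ dker mulr0 subr0.
rewrite lerD2l; apply: ler_sum => i _; case: rho_reg => _ _ rho_mono _; apply: rho_mono => //.
by rewrite !mxE.
Qed.

Definition resid_l1 (x : 'rV[R]_m) := \sum_(k < n) `|lin (Z k) x|.

Lemma resid_l1_ge0 x : 0 <= resid_l1 x.
Proof. by apply: sumr_ge0 => k _. Qed.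

Lemma resid_l1Z s x : resid_l1 (s *: x) = `|s| * resid_l1 x.
Proof. by rewrite /resid_l1 mulr_sumr; apply: eq_bigr => k _; rewrite linZ normrM. Qed.

Lemma resid_l1_continuous : continuous resid_l1.
Proof.
apply: continuous_big; first exact: pseudometric_normed_Zmodule.add_continuous.
by move=> k _ z; exact: (cvg_norm (@lin_continuous (Z k) z)).
Qed.

Definition resid_bound := \sum_(k < n) (`|y k ord0| + \sum_(l < n) y l ord0 ^+ 2 + 1).

Lemma resid_l1_le x : obj x <= obj 0 -> resid_l1 x <= resid_bound.
Proof.
rewrite !objE [X in _ <= _ + X]big1 => [|i _]; last by rewrite mxE normr0; case: rho_reg.
rewrite addr0; under [X in _ <= _ * X]eq_bigr do rewrite lin0 subr0.
move=> obj_le; apply: ler_sum => k _.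
have c_gt0 : 0 < (2 * n%:R)^-1 :> R.
  by rewrite invr_gt0 mulr_gt0 // ltr0n (leq_ltn_trans _ (ltn_ord k)).
have sq_le : (y k ord0 - lin (Z k) x) ^+ 2 <= \sum_(l < n) y l ord0 ^+ 2.
  apply: le_trans (_ : \sum_(l < n) (y l ord0 - lin (Z l) x) ^+ 2 <= _).
    by rewrite (bigD1 k) //= lerDl sumr_ge0 // => l _; exact: sqr_ge0.
  by rewrite -(ler_pM2l c_gt0); have := penalty_ge0 x; lra.
have := ler_normB (y k ord0) (y k ord0 - lin (Z k) x); rewrite opprB addrC subrK.
have := normr_ge0 (y k ord0 - lin (Z k) x).
rewrite -[_ ^+ 2]real_normK ?num_real // in sq_le; nra.
Qed.

Definition sgn (σ : 'I_m -> bool) i : R := if σ i then 1 else -1.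

Definition orthant (T : {set 'I_m}) (σ : 'I_m -> bool) : set 'rV[R]_m :=
  [set x | (forall i, i \notin T -> x ord0 i = 0) /\ forall i, 0 <= sgn σ i * x ord0 i].

Lemma orthant_norm T σ x i : orthant T σ x -> `|x ord0 i| = sgn σ i * x ord0 i.
Proof.
move=> [_ /(_ i)]; rewrite /sgn; case: (σ i); rewrite ?mul1r ?mulN1r => x_sgn.
  exact: ger0_norm.
by rewrite ler0_norm // -oppr_ge0.
Qed.

Lemma orthantZ T σ s x : 0 <= s -> orthant T σ x -> orthant T σ (s *: x).
Proof.
move=> s0 [xT xs]; split => i; rewrite mxE; first by move/xT->; rewrite mulr0.
by rewrite mulrCA mulr_ge0.
Qed.

Lemma orthant_subset (T T' : {set 'I_m}) σ :
  T \subset T' -> orthant T σ `<=` orthant T' σ.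
Proof.
move=> TT' x [xT xs]; split=> // i iT'; apply: xT.
by apply: contra iT'; exact: (fintype.subsetP TT').
Qed.

Lemma orthant_supp T σ x i : orthant T σ x -> x ord0 i != 0 -> i \in T.
Proof. by move=> [xT _]; apply: contraR => /xT ->. Qed.

Definition orthant_ball (T : {set 'I_m}) σ (r : R) :=
  [set x | orthant T σ x /\ forall i, `|x ord0 i| <= r].

Lemma compact_orthant_ball T σ r : 0 <= r -> compact (orthant_ball T σ r).
Proof.
move=> r0; pose lo i := if (i \in T) && ~~ σ i then - r else 0.
pose hi i := if (i \in T) && σ i then r else 0.
have -> : orthant_ball T σ r = [set x | forall i, `[lo i, hi i]%classic (x ord0 i)].
  apply/seteqP; split => x /=.
    move=> [[xT xs] xr] i; rewrite in_itv /= /lo /hi.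
    case: (boolP (i \in T)) => iT; last by rewrite xT // lexx.
    have := xr i; rewrite (@orthant_norm T σ x i) //; have := xs i.
    by rewrite /sgn; case: (σ i) => /=; lra.
  move=> xb; have xi i : lo i <= x ord0 i <= hi i by have := xb i; rewrite in_itv.
  split; first split.
  - move=> i iT; have := xi i; rewrite /lo /hi (negbTE iT).
    by move=> /andP[? ?]; apply/le_anti/andP.
  - move=> i; have := xi i; rewrite /lo /hi /sgn.
    by case: (i \in T); case: (σ i) => /=; lra.
  - move=> i; have := xi i; rewrite /lo /hi ler_norml.
    by case: (i \in T); case: (σ i) => /=; lra.
exact: (rV_compact (fun i => @segment_compact R _ _)).
Qed.

Definition kernel_free T σ :=
  forall d, orthant T σ d -> (forall k, lin (Z k) d = 0) -> d = 0.

Definition l1norm (x : 'rV[R]_m) := \sum_(i < m) `|x ord0 i|.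

Lemma l1norm_ge0 x : 0 <= l1norm x.
Proof. by apply: sumr_ge0 => i _. Qed.

Lemma coord_le_l1norm (x : 'rV[R]_m) j : `|x ord0 j| <= l1norm x.
Proof. by rewrite /l1norm (bigD1 j) //= lerDl sumr_ge0. Qed.

Lemma orthant_l1normE T σ x : orthant T σ x -> l1norm x = lin (sgn σ) x.
Proof. by move=> xO; apply: eq_bigr => i _; rewrite (orthant_norm i xO). Qed.

Lemma orthant_normalize T σ x : orthant T σ x -> 0 < l1norm x ->
  (orthant_ball T σ 1 `&` [set x | lin (sgn σ) x = 1]) ((l1norm x)^-1 *: x).
Proof.
move=> xO l1_gt0; have inv_ge0 : 0 <= (l1norm x)^-1 by rewrite invr_ge0 ltW.
split; last by rewrite /= linZ -(orthant_l1normE xO) mulVf // gt_eqF.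
split=> [|j]; first exact: orthantZ.
by rewrite mxE normrM ger0_norm // ler_pdivrMl // mulr1 coord_le_l1norm.
Qed.

(* The intersection of the orthant with the unit l1 sphere is compact, and
   [resid_l1] does not vanish on it. *)
Lemma orthant_coercive T σ : kernel_free T σ ->
  exists2 e, 0 < e & forall x, orthant T σ x -> e * l1norm x <= resid_l1 x.
Proof.
move=> kfree; set K := orthant_ball T σ 1 `&` [set x | lin (sgn σ) x = 1].
have l1_cases x : l1norm x = 0 \/ 0 < l1norm x.
  by have := l1norm_ge0 x; rewrite le_eqVlt => /orP[/eqP<-|]; [left|right].
have [K0|noK] := pselect (K !=set0); last first.
  exists 1 => // x xO; case: (l1_cases x) => [->|l1_gt0].
    by rewrite mulr0 resid_l1_ge0.
  by exfalso; apply: noK; exists ((l1norm x)^-1 *: x); exact: orthant_normalize.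
have cK : compact K.
  apply: compact_closedI; first exact: compact_orthant_ball.
  exact: (preimage_closed (fun x _ => @lin_continuous _ x) (@closed_eq R 1)).
have [c [[cO _] c1] cmin] := lsc_compact_attains_min K0 cK
  (fun x _ => continuous_lsc_at (@resid_l1_continuous x)) (fun x _ => resid_l1_ge0 x).
have c_gt0 : 0 < resid_l1 c.
  rewrite lt_neqAle resid_l1_ge0 andbT; apply/eqP => /esym/eqP.
  rewrite psumr_eq0 // => /allP c_ker.
  have c0 : c = 0.
    by apply: kfree => // k; apply/normr0_eq0/eqP/c_ker; rewrite mem_index_enum.
  by move: c1; rewrite /= c0 lin0 => /esym/eqP; rewrite oner_eq0.
exists (resid_l1 c) => // x xO; case: (l1_cases x) => [->|l1_gt0].
  by rewrite mulr0 resid_l1_ge0.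
have := cmin _ (orthant_normalize xO l1_gt0).
by rewrite resid_l1Z ger0_norm ?invr_ge0 ?(ltW l1_gt0) // ler_pdivlMl // mulrC.
Qed.

Lemma orthant_min_kernel_free T σ : kernel_free T σ -> attains_min obj (orthant T σ).
Proof.
move=> /orthant_coercive[e e_gt0 coercive].
have r_ge0 : 0 <= resid_bound / e.
  apply: divr_ge0 (ltW e_gt0); apply: sumr_ge0 => k _.
  by rewrite !addr_ge0 // sumr_ge0 // => l _; exact: sqr_ge0.
have ball0 : orthant_ball T σ (resid_bound / e) 0.
  by split; [split=> i|move=> i]; rewrite mxE ?mulr0 ?normr0.
apply: (attains_min_dominated (B := orthant_ball T σ (resid_bound / e))).
- by move=> x [].
- apply: (@lsc_compact_attains_min _ _ _ _ 0) => [|||x _].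
  + by exists 0.
  + exact: compact_orthant_ball.
  + by move=> x _; exact: obj_lsc.
  + exact: obj_ge0.
- move=> x xO; have [obj_le|obj_gt] := leP (obj x) (obj 0).
    exists x => //; split=> // j; rewrite ler_pdivlMr // mulrC.
    apply: le_trans (resid_l1_le obj_le).
    exact: le_trans (ler_wpM2l (ltW e_gt0) (coord_le_l1norm x j)) (coercive x xO).
  by exists 0 => //; exact: ltW.
Qed.

(* Moving from [x] against a kernel direction [d] of the orthant until the first
   coordinate vanishes shrinks every [|x_i|], hence does not increase [obj]. *)
Lemma orthant_slide T σ d j0 : orthant T σ d -> (forall k, lin (Z k) d = 0) ->
  d ord0 j0 != 0 -> forall x, orthant T σ x ->
  exists2 j, d ord0 j != 0 & exists2 x', orthant (T :\ j) σ x' & obj x' <= obj x.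
Proof.
move=> dO dker dj0 x xO.
case: (@arg_minP _ R _ j0 (fun i => d ord0 i != 0)
  (fun i => (sgn σ i * x ord0 i) / (sgn σ i * d ord0 i)) dj0).
move=> j dj jmin; set t := _ / _ in jmin; exists j => //.
have sgn_neq0 i : sgn σ i != 0 by rewrite /sgn; case: (σ i); rewrite ?oppr_eq0 oner_eq0.
have sd_gt0 i : d ord0 i != 0 -> 0 < sgn σ i * d ord0 i.
  by move=> di; rewrite lt_neqAle eq_sym mulf_eq0 negb_or sgn_neq0 di (proj2 dO i).
have t_ge0 : 0 <= t by rewrite divr_ge0 ?(proj2 xO j) ?ltW ?sd_gt0.
have x'E i : sgn σ i * (x - t *: d) ord0 i = sgn σ i * x ord0 i - t * (sgn σ i * d ord0 i).
  by rewrite !mxE mulrBr mulrCA.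
have x'_range i : 0 <= sgn σ i * (x - t *: d) ord0 i <= sgn σ i * x ord0 i.
  rewrite x'E gerBl mulr_ge0 ?(proj2 dO i) ?andbT //.
  have [di0|di] := eqVneq (d ord0 i) 0; first by rewrite di0 !mulr0 subr0 (proj2 xO i).
  by rewrite subr_ge0 -ler_pdivlMr ?sd_gt0 // jmin.
have x'O : orthant T σ (x - t *: d).
  split=> i; last by case/andP: (x'_range i).
  by move=> iT; rewrite !mxE (proj1 xO i iT) (proj1 dO i iT) mulr0 subr0.
exists (x - t *: d).
  split=> [i|]; last by case: x'O.
  rewrite in_setD1 negb_and negbK => /orP[/eqP->|iT]; last exact: (proj1 x'O).
  have : sgn σ j * (x - t *: d) ord0 j = 0 by rewrite x'E /t divfK ?subrr ?gt_eqF ?sd_gt0.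
  by move/eqP; rewrite mulf_eq0 (negbTE (sgn_neq0 j)) => /eqP.
apply: obj_sub_kernel => // i.
have := orthant_norm i x'O; move: (x'_range i); rewrite !mxE => /andP[_ le_x] ->.
by rewrite (orthant_norm i xO).
Qed.

Lemma orthant_attains_min T σ : attains_min obj (orthant T σ).
Proof.
have [N] := ubnP #|T|; elim: N T => // N IH T /ltnSE T_le_N.
have [kfree|] := pselect (kernel_free T σ); first exact: orthant_min_kernel_free.
move=> /existsNP[d /existsNP[dO /existsNP[dker /eqP dn0]]].
have [j0 dj0] : exists j, d ord0 j != 0.
  apply/existsP; apply: contraNT dn0 => /existsPn d0.
  by apply/eqP/rowP => j; rewrite mxE; apply/eqP/negPn/d0.
apply: (attains_min_dominated
  (B := [set x | exists2 j, d ord0 j != 0 & orthant (T :\ j) σ x])).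
- by move=> x [j _]; apply: orthant_subset; exact: subsetDl.
- apply: (attains_min_bigcup (P := fun j => d ord0 j != 0) dj0) => j dj; apply: IH.
  by move: T_le_N; rewrite (cardsD1 j T) (orthant_supp dO dj).
- move=> x xO; have [j dj [x' x'T le_x']] := orthant_slide dO dker dj0 xO.
  by exists x' => //; exists j.
Qed.

Lemma support_attains_min (U : {set 'I_m}) :
  attains_min obj [set x | forall i, i \notin U -> x ord0 i = 0].
Proof.
apply: (attains_min_dominated
  (B := [set x | exists2 σ : {ffun 'I_m -> bool}, true & orthant U σ x])).
- by move=> x [σ _ []].
- apply: (attains_min_bigcup (P := xpredT) (i0 := [ffun=> true])) => // σ _.
  exact: orthant_attains_min.
- move=> x xU; exists x => //; exists [ffun i => 0 <= x ord0 i] => //; split=> // i.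
  rewrite /sgn ffunE; case: (leP 0 (x ord0 i)) => [|/ltW]; first by rewrite mul1r.
  by rewrite mulN1r oppr_ge0.
Qed.
End Objective.

Lemma exists_in_P (R : realType) (rho : R -> R) (n m : nat) (y : 'cV[R]_n)
    (Z : 'M[R]_(n, m)) (U : {set 'I_m}) :
  regularizer rho -> exists theta, in_P rho y Z U theta.
Proof.
move=> rho_reg; have [mu muU mu_min] := support_attains_min Z y rho_reg U.
have suppP (theta : 'cV[R]_m) :
    supp theta \subset U <-> forall i, i \notin U -> theta i ord0 = 0.
  split=> [/fintype.subsetP sU i iU|thU].
    by apply/eqP; apply: contraNT iU => th_i; apply: sU; rewrite inE.
  by apply/fintype.subsetP => i; rewrite inE; apply: contraR => /thU ->.
exists mu^T; split=> [|theta /suppP thU]; first by apply/suppP => i /muU; rewrite mxE.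
by rewrite -[theta]trmxK; apply: mu_min => i /thU; rewrite mxE.
Qed.

Lemma in_W_subset (R : realType) (rho : R -> R) (n m : nat) (Z : 'M[R]_(n, m))
    (theta_star : 'cV[R]_m) (S U : {set 'I_m}) (w : 'cV[R]_n) :
  regularizer rho -> supp theta_star \subset S -> S \subset U ->
  in_W rho Z theta_star S w -> in_W rho Z theta_star U w.
Proof.
move=> rho_reg starS SU [thS [[thS_S thS_min] thS_supp]].
have [thU [thU_U thU_min]] := exists_in_P (Z *m theta_star + w) Z U rho_reg.
have [thU_supp|] := eqVneq (supp thU) (supp theta_star); last by exists thU.
exists thS; split=> //; split=> [|theta thetaU]; first exact: fintype.subset_trans thS_S SU.
by apply: le_trans (thU_min _ thetaU); apply: thS_min; rewrite thU_supp.
Qed.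

Theorem lemma6 (R : realType) (n m : nat) (Z : 'M[R]_(n, m))
    (theta_star : 'cV[R]_m) (rho : R -> R) (S U : {set 'I_m}) :
  regularizer rho ->
  supp theta_star \subset S -> S \subset U ->
  (forall w : 'cV[R]_n, in_W rho Z theta_star S w -> in_W rho Z theta_star U w) /\
  (forall (Omega : Type) (eps : Omega -> 'cV[R]_n) (omega : Omega),
      in_W rho Z theta_star S (eps omega) -> in_W rho Z theta_star U (eps omega)).
Proof.
by move=> rho_reg starS SU; split=> [w|Omega eps omega]; exact: in_W_subset.
Qed.
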